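(* Let $m \le n$, let $1 \le h \le k \le m$, and let $|v\rangle \in \mathcal{H}_n \otimes \mathcal{H}_m$ be a unit vector with $SR(|v\rangle) \le k$. Then there exist nonnegative real constants $d_1,\dots,d_k$ and (not necessarily distinct) unit vectors $|v_1\rangle,\dots,|v_k\rangle \in \mathcal{H}_n\otimes\mathcal{H}_m$ such that: - $\sum_{j=1}^k d_j^2 = h$; - $SR(|v_j\rangle) \le h$ for all $j$; - $h|v\rangle = \sum_{j=1}^k d_j |v_j\rangle$.
   Context: $\mathcal{H}_d = \mathbb{C}^d$ and $m \le n$. $SR(|v\rangle)$ is the Schmidt rank of $|v\rangle$: the least number of terms $|a\rangle\otimes|b\rangle$ needed to write $|v\rangle$ as a linear combination of such terms, equivalently the rank of its $n\times m$ coefficient matrix. *)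

(* C^d realised as R[i]^d for a real closed field R
   (R = the reals gives the usual complex numbers). *)
From HB Require Import structures.
From mathcomp Require Import all_boot all_order all_algebra.
From mathcomp.real_closed Require Export complex.
Set Implicit Arguments. Unset Strict Implicit. Unset Printing Implicit Defensive.
Import Order.TTheory GRing.Theory Num.Theory.
Local Open Scope ring_scope.

(* A vector of H_n (x) H_m is represented by its n x m coefficient matrix
   (v = sum_{i,j} A i j |i>|j>). *)
Definition tensor (R : rcfType) (n m : nat) := 'M[R[i]]_(n, m).

Definition sqnorm (R : rcfType) (n m : nat) (A : 'M[R[i]]_(n, m)) : R[i] :=
  \sum_(i < n) \sum_(j < m) `|A i j| ^+ 2.

Definition unit_vec (R : rcfType) (n m : nat) (A : 'M[R[i]]_(n, m)) : Prop :=
  sqnorm A = 1.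

Definition SR (R : rcfType) (n m : nat) (A : 'M[R[i]]_(n, m)) : nat := \rank A.

From HB Require Import structures.
From mathcomp Require Import all_boot all_order all_algebra.
From mathcomp.real_closed Require Import complex.
From mathcomp Require Import zify sesquilinear spectral.
Set Implicit Arguments. Unset Strict Implicit. Unset Printing Implicit Defensive.
Import Order.TTheory GRing.Theory Num.Theory.
Local Open Scope ring_scope.
Local Open Scope sesquilinear_scope.

(* Factor v = X B where B is an isometry with r = SR(v) <= k orthonormal rows.
   The cyclic window {l | (l + j) mod k < h} has h elements, and each l < k
   lies in exactly h of the k windows j < k.  With P_j the diagonal projection
   onto window j, v'_j = X P_j B has Schmidt rank <= h, sum_j v'_j = h v and,
   B being an isometry, sum_j |v'_j|^2 = h |v|^2 = h.  Take d_j = |v'_j| and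
   v_j = v'_j / d_j. *)

Lemma sum_ord_eq2 h (a b : nat) :
  (\sum_(t < h) ((a == t) && (b == t)))%N = ((a == b) && (a < h))%N.
Proof.
by elim: h => [|h IH]; rewrite ?big_ord0 ?ltn0 ?andbF // big_ord_recr /= IH; lia.
Qed.

Definition window (k h j l : nat) : bool := ((l + j) %% k < h)%N.

Lemma sum_ord_lt k h : (\sum_(t < k) (t < h))%N = minn k h.
Proof. by elim: k => [|k IH]; rewrite ?big_ord0 ?min0n // big_ord_recr /= IH; lia. Qed.

Lemma sum_window k h l : (h <= k)%N -> (\sum_(j < k) window k h j l)%N = h.
Proof.
move=> hk; have [k0|k_gt0] := posnP k.
  by move: hk; rewrite k0 leqn0 => /eqP->; rewrite big_ord0.
pose rot (j : 'I_k) : 'I_k := Ordinal (ltn_pmod (l + j) k_gt0).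
have rot_inj : injective rot.
  by move=> a b /(congr1 val)/eqP; rewrite /= eqn_modDl !modn_small // => /eqP/val_inj.
by rewrite -[RHS](minn_idPr hk) -sum_ord_lt [RHS](reindex_inj rot_inj).
Qed.

Section LowRankSplit.
Variable R : rcfType.
Local Notation C := R[i].

Lemma sqnorm_ge0 n m (A : 'M[C]_(n, m)) : 0 <= sqnorm A.
Proof. by apply: sumr_ge0 => i _; apply: sumr_ge0 => j _; apply: exprn_ge0. Qed.

Lemma sqnorm_eq0 n m (A : 'M[C]_(n, m)) : sqnorm A = 0 -> A = 0.
Proof.
move=> A0; apply/matrixP => i j; rewrite mxE.
have Ai0 : \sum_(j < m) `|A i j| ^+ 2 = 0.
  apply: (psumr_eq0P _ A0) => // i' _.
  by apply: sumr_ge0 => j' _; exact: exprn_ge0.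
have /eqP : `|A i j| ^+ 2 = 0 by apply: (psumr_eq0P _ Ai0) => // j' _; exact: exprn_ge0.
by rewrite sqrf_eq0 normr_eq0 => /eqP.
Qed.

Lemma sqnormZ n m (a : C) (A : 'M[C]_(n, m)) :
  sqnorm (a *: A) = `|a| ^+ 2 * sqnorm A.
Proof.
rewrite /sqnorm mulr_sumr; apply: eq_bigr => i _; rewrite mulr_sumr.
by apply: eq_bigr => j _; rewrite mxE normrM exprMn.
Qed.

Lemma sqnorm_delta n m (i0 : 'I_n) (j0 : 'I_m) :
  sqnorm (delta_mx i0 j0 : 'M[C]_(n, m)) = 1.
Proof.
rewrite /sqnorm (bigD1 i0) //= (bigD1 j0) //= mxE !eqxx normr1 expr1n.
rewrite big1 => [|j /negbTE j0F]; last by rewrite mxE j0F andbF normr0 expr0n.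
rewrite big1 ?addr0 // => i /negbTE i0F; apply: big1 => j _.
by rewrite mxE i0F normr0 expr0n.
Qed.

Lemma sqnorm_tr n m (A : 'M[C]_(n, m)) : sqnorm A = \tr (A *m A^t*).
Proof.
rewrite /sqnorm /mxtrace; apply: eq_bigr => i _; rewrite mxE.
by apply: eq_bigr => j _; rewrite !mxE normCK.
Qed.

Lemma sqnorm_mulmx_unitary n m p (X : 'M[C]_(n, m)) (B : 'M[C]_(m, p)) :
  B \is unitarymx -> sqnorm (X *m B) = sqnorm X.
Proof.
move=> /unitarymxP BB1.
by rewrite !sqnorm_tr trmx_mul map_mxM mulmxA -(mulmxA X) BB1 mulmx1.
Qed.

Lemma sqnorm_mul_diag n m (X : 'M[C]_(n, m)) (d : 'rV[C]_m) :
  sqnorm (X *m diag_mx d) = \sum_(i < n) \sum_(j < m) `|d 0 j| ^+ 2 * `|X i j| ^+ 2.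
Proof.
rewrite mul_mx_diag; apply: eq_bigr => i _; apply: eq_bigr => j _.
by rewrite mxE normrM exprMn mulrC.
Qed.

Lemma unitary_rank_factor n m (v : 'M[C]_(n, m)) :
  exists2 B : 'M[C]_(\rank v, m), B \is unitarymx & v = v *m B^t* *m B.
Proof.
pose B := schmidt (row_base v).
have uB : B \is unitarymx by exact/schmidt_unitarymx/rank_leq_col.
exists B => //.
have /submxP [X vX] : (v <= B)%MS.
  by rewrite (eqmx_schmidt_free (row_base_free v)) eq_row_base.
have -> : v *m B^t* = X *m B *m B^t* by rewrite -vX.
by rewrite mulmxtVK.
Qed.

Definition window_sel (k h r j : nat) : 'M[C]_(r, h) :=
  \matrix_(l, t) (((l + j) %% k)%N == t)%:R.

Lemma window_sel_mul_tr k h r j : (r <= k)%N ->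
  window_sel k h r j *m (window_sel k h r j)^T =
  diag_mx (\row_l (window k h j l)%:R).
Proof.
move=> rk; apply/matrixP => l l'; rewrite !mxE.
under eq_bigr => t _ do rewrite !mxE -natrM mulnb.
rewrite -natr_sum sum_ord_eq2.
have [<-|ll'] := eqVneq l l'; first by rewrite eqxx mulr1n.
have [lk l'k] := (leq_trans (ltn_ord l) rk, leq_trans (ltn_ord l') rk).
by rewrite mulr0n eqn_modDr (modn_small lk) (modn_small l'k) val_eqE (negbTE ll').
Qed.

Lemma low_rank_split n m k h (v : 'M[C]_(n, m)) :
  (h <= k)%N -> (\rank v <= k)%N ->
  exists W : 'I_k -> 'M[C]_(n, m),
    [/\ \sum_j W j = h%:R *: v,
        \sum_j sqnorm (W j) = h%:R * sqnorm v
      & forall j, (\rank (W j) <= h)%N].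
Proof.
move=> hk rk; have [B uB vXB] := unitary_rank_factor v.
set X := v *m B^t* in vXB.
pose w (j : 'I_k) : 'rV[C]_(\rank v) := \row_l (window k h j l)%:R.
exists (fun j => X *m diag_mx (w j) *m B); split.
- have sum_diag_w : \sum_j diag_mx (w j) = h%:R%:M.
    apply/matrixP => l l'; rewrite summxE mxE.
    by under eq_bigr do rewrite !mxE; rewrite sumrMnl -natr_sum sum_window.
  by rewrite -mulmx_suml -mulmx_sumr sum_diag_w mul_mx_scalar -scalemxAl -vXB.
- have sqnorm_w j l : `|w j 0 l| ^+ 2 = (window k h j l)%:R.
    by rewrite mxE; case: window; rewrite ?normr1 ?normr0 ?expr1n ?expr0n.
  under eq_bigr do rewrite sqnorm_mulmx_unitary // sqnorm_mul_diag.
  have -> : sqnorm v = sqnorm X by rewrite [in LHS]vXB sqnorm_mulmx_unitary.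
  rewrite exchange_big mulr_sumr.
  apply: eq_bigr => i _; rewrite exchange_big mulr_sumr.
  apply: eq_bigr => l _; under eq_bigr => j _ do rewrite sqnorm_w.
  by rewrite -mulr_suml -natr_sum sum_window.
- move=> j; rewrite -window_sel_mul_tr // !mulmxA -(mulmxA (X *m _)).
  exact: mulmx_max_rank.
Qed.

Definition vnorm n m (A : 'M[C]_(n, m)) : R := Num.sqrt (complex.Re (sqnorm A)).

Lemma sqr_vnormC n m (A : 'M[C]_(n, m)) : (vnorm A)%:C%C ^+ 2 = sqnorm A.
Proof.
have := sqnorm_ge0 A; rewrite lecE => /andP[/eqP Im0 Re_ge0].
by rewrite -rmorphXn sqr_sqrtr // [RHS]complexE Im0 mulr0 addr0.
Qed.

(* d_j = 0 still requires a unit v_j; any rank-one unit vector will do. *)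
Definition normalize n m (i0 : 'I_n) (j0 : 'I_m) (A : 'M[C]_(n, m)) :=
  if vnorm A == 0 then delta_mx i0 j0 else ((vnorm A)^-1)%:C%C *: A.

Lemma unit_vec_normalize n m (i0 : 'I_n) (j0 : 'I_m) (A : 'M[C]_(n, m)) :
  unit_vec (normalize i0 j0 A).
Proof.
rewrite /unit_vec /normalize; have [_|A_neq0] := eqVneq (vnorm A) 0.
  exact: sqnorm_delta.
rewrite sqnormZ -sqr_vnormC ger0_norm ?ler0c ?invr_ge0 ?sqrtr_ge0 //.
by rewrite -exprMn -rmorphM mulVf // rmorph1 expr1n.
Qed.

Lemma rank_normalize n m (i0 : 'I_n) (j0 : 'I_m) (A : 'M[C]_(n, m)) :
  (\rank (normalize i0 j0 A) <= maxn 1 (\rank A))%N.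
Proof.
rewrite /normalize; case: ifP => _; first by rewrite mxrank_delta leq_maxl.
exact: leq_trans (mxrank_scale _ _) (leq_maxr _ _).
Qed.

Lemma vnormZ_normalize n m (i0 : 'I_n) (j0 : 'I_m) (A : 'M[C]_(n, m)) :
  (vnorm A)%:C%C *: normalize i0 j0 A = A.
Proof.
rewrite /normalize; have [A0|A_neq0] := eqVneq (vnorm A) 0.
  by rewrite A0 scale0r; apply/esym/sqnorm_eq0; rewrite -sqr_vnormC A0 expr0n.
by rewrite scalerA -rmorphM mulfV // scale1r.
Qed.

End LowRankSplit.

Theorem lemma4p12 (R : rcfType) (n m h k : nat)
  (Hmn : (m <= n)%N) (Hh1 : (1 <= h)%N) (Hhk : (h <= k)%N) (Hkm : (k <= m)%N)
  (v : 'M[R[i]]_(n, m)) (Hv : unit_vec v) (HSR : (SR v <= k)%N) :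
  exists (d : 'I_k -> R) (vs : 'I_k -> 'M[R[i]]_(n, m)),
    (forall j, 0 <= d j) /\
    (forall j, unit_vec (vs j)) /\
    \sum_(j < k) d j ^+ 2 = h%:R /\
    (forall j, (SR (vs j) <= h)%N) /\
    h%:R *: v = \sum_(j < k) ((d j)%:C)%C *: vs j.
Proof.
have [W [sumW sqnormW rankW]] := low_rank_split Hhk HSR.
have m_gt0 : (0 < m)%N by rewrite (leq_trans Hh1) // (leq_trans Hhk).
pose i0 : 'I_n := Ordinal (leq_trans m_gt0 Hmn).
pose j0 : 'I_m := Ordinal m_gt0.
exists (fun j => vnorm (W j)), (fun j => normalize i0 j0 (W j)).
split=> [j|]; first exact: sqrtr_ge0.
split=> [j|]; first exact: unit_vec_normalize.
split.
  apply: (@complexI R); rewrite rmorph_sum rmorph_nat.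
  by under eq_bigr do rewrite rmorphXn sqr_vnormC; rewrite sqnormW Hv mulr1.
split=> [j|].
  by rewrite (leq_trans (rank_normalize _ _ _)) // geq_max Hh1 rankW.
by rewrite -sumW; apply: eq_bigr => j _; rewrite vnormZ_normalize.
Qed.
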